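(* Let $n\geq 2$. In any presentation of the ring $\mathrm{Mat}_n(\mathbb{Z})$ (as a unital associative ring) by generators and relations, i.e. any isomorphism $\mathrm{Mat}_n(\mathbb{Z})\cong\mathbb{Z}\langle S\rangle/I$ where $\mathbb{Z}\langle S\rangle$ is the free unital associative ring on a finite set $S$ and $I$ is the two-sided ideal generated by a set of relations, the number of relations is at least the number $|S|$ of generators.
   Context: All rings are associative with unit; presentations are in the category of unital associative rings. *)

From HB Require Import structures.
From mathcomp Require Import all_boot all_order all_algebra.
From mathcomp Require Import finmap.
From mathcomp.multinomials Require Import monalg.
Set Implicit Arguments. Unset Strict Implicit. Unset Printing Implicit Defensive.
Import GRing.Theory.
Local Open Scope ring_scope.

(* The free unital associative ring Z<S> on a set S: the monoid ring over Z
   of the free monoid {fmonom S} on S (noncommutative words). *)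
Definition free_ring (S : choiceType) := {malg int[{fmonom S}]}.

Definition in_ideal_gen (A : pzRingType) (Rel : A -> Prop) (x : A) : Prop :=
  exists (k : nat) (a r b : 'I_k -> A),
    (forall i, Rel (r i)) /\ x = \sum_(i < k) a i * r i * b i.

From HB Require Import structures.
From mathcomp Require Import all_boot all_order all_algebra.
From mathcomp Require Import finmap.
From mathcomp.multinomials Require Import monalg.
Set Implicit Arguments. Unset Strict Implicit. Unset Printing Implicit Defensive.
Import GRing.Theory.
Local Open Scope ring_scope.

(* Reduce mod 2 and count derivations.  Write V = Mat_n(Z/2) and let phi' be
   phi followed by reduction.  Every assignment t : S -> V of values to the
   generators extends uniquely to a derivation D_t : Z<S> -> V along phi'
   (realised by the ring map p |-> [[phi' p, D_t p], [0, phi' p]]), and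
   t |-> D_t is additive.  If D_t kills the relations, it kills ker phi, so it
   factors through Mat_n(Z); every such derivation is inner, D_t = [P, phi' _],
   and the commutators [P, _] with P in V take fewer than |V| values since
   scalar P give 0.  Hence t |-> (D_t r)_(r in Rel) is an additive map
   V^S -> V^Rel whose kernel has fewer than |V| elements, so
   |V|^|S| < |V|^(|Rel| + 1).  The argument only needs n >= 1. *)

HB.instance Definition _ (I : finType) (V : finZmodType) :=
  GRing.Zmodule.on {ffun I -> V}.

Lemma card_le_mul_ker (A B : finZmodType) (f : A -> B) : zmod_morphism f ->
  (#|A| <= #|B| * #|[set x | f x == 0%R]|)%N.
Proof.
move=> f_add; pose pre y := odflt 0 [pick x | f x == y].
have f_pre x : f (pre (f x)) = f x.
  by rewrite /pre; case: pickP => [y /eqP | /(_ x)] //; rewrite eqxx.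
pose g x := (f x, x - pre (f x)).
have g_inj : injective g.
  by move=> x y [fxy]; rewrite fxy => /addIr.
rewrite -cardsT -[#|B|]cardsT -cardsX -(card_imset _ g_inj).
apply/subset_leq_card/subsetP => _ /imsetP[x _ ->].
by rewrite !inE f_add f_pre subrr eqxx.
Qed.

Lemma delta_mxM (R : comPzSemiRingType) n (i j : 'I_n) (A : 'M[R]_n) :
  delta_mx i j *m A = \sum_k A j k *: delta_mx i k.
Proof.
rewrite {1}[A]matrix_sum_delta mulmx_sumr (bigD1 j) //= [X in _ + X]big1 ?addr0.
  by rewrite mulmx_sumr; apply: eq_bigr => k _; rewrite -scalemxAr mul_delta_mx.
move=> l ljF; rewrite mulmx_sumr big1 // => k _.
by rewrite -scalemxAr mul_delta_mx_0 ?scaler0 // eq_sym.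
Qed.

Lemma mxM_delta (R : pzSemiRingType) n (i j : 'I_n) (A : 'M[R]_n) :
  A *m delta_mx i j = \sum_k A k i *: delta_mx k j.
Proof.
rewrite {1}[A]matrix_sum_delta mulmx_suml; apply: eq_bigr => k _.
rewrite mulmx_suml (bigD1 i) //= [X in _ + X]big1 ?addr0 => [|l liF].
  by rewrite -scalemxAl mul_delta_mx.
by rewrite -scalemxAl mul_delta_mx_0 ?scaler0.
Qed.

Section Derivations.
Variables (R : comNzRingType) (F : pzRingType) (n : nat).
Variable phi : {rmorphism F -> 'M[int]_n.+1}.
Local Notation V := 'M[R]_n.+1.

Definition phiR : F -> V := map_mx intr \o phi.
HB.instance Definition _ := GRing.RMorphism.on phiR.

Definition derivation (E : F -> V) :=
  forall x y, E (x * y) = phiR x * E y + E x * phiR y.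

Lemma derivation1 (E : F -> V) : derivation E -> E 1 = 0.
Proof.
move=> dE; have := dE 1 1; rewrite mulr1 rmorph1 mul1r mulr1 => E11.
by apply: (addrI (E 1)); rewrite addr0 -E11.
Qed.

Lemma derivation_ideal (Rel : F -> Prop) (E : {additive F -> V}) :
    derivation E -> (forall r, Rel r -> phi r = 0) ->
    (forall r, Rel r -> E r = 0) ->
  forall p, in_ideal_gen Rel p -> E p = 0.
Proof.
move=> dE phiRel ERel p [k [a [r [b [Rr ->]]]]].
rewrite raddf_sum big1 // => i _.
have phiR_r : phiR (r i) = 0 by rewrite /phiR /= (phiRel _ (Rr i)) map_mx0.
have phiR_ar : phiR (a i * r i) = 0.
  by rewrite /phiR /= rmorphM (phiRel _ (Rr i)) mulr0 map_mx0.
by rewrite dE phiR_ar dE phiR_r (ERel _ (Rr i)) !(mulr0, mul0r, addr0).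
Qed.

Lemma ker_additive_unitsE (E : {additive F -> V})
    (e : 'I_n.+1 -> 'I_n.+1 -> F) :
    (forall i j, phi (e i j) = delta_mx i j) ->
    (forall p, phi p = 0 -> E p = 0) ->
  forall x, E x = \sum_i \sum_j phiR x i j *: E (e i j).
Proof.
move=> phi_e Eker x; pose y : F := \sum_i \sum_j e i j *~ phi x i j.
have phi_y : phi y = phi x.
  rewrite [RHS]matrix_sum_delta rmorph_sum; apply: eq_bigr => i _.
  rewrite rmorph_sum; apply: eq_bigr => j _.
  by rewrite rmorphMz phi_e -scaler_int intz.
have -> : E x = E y.
  by apply/eqP; rewrite -subr_eq0 -raddfB Eker // rmorphB phi_y subrr.
rewrite raddf_sum; apply: eq_bigr => i _.
rewrite raddf_sum; apply: eq_bigr => j _.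
by rewrite raddfMz mxE -scaler_int.
Qed.

Lemma derivation_inner (E : {additive F -> V}) :
    (forall M, exists p, phi p = M) -> derivation E ->
    (forall p, phi p = 0 -> E p = 0) ->
  exists P : V, forall x, E x = P * phiR x - phiR x * P.
Proof.
move=> phi_surj dE Eker.
have [e phi_e] := fin_all_exists
  (fun ij : 'I_n.+1 * 'I_n.+1 => phi_surj (delta_mx ij.1 ij.2)).
have phiR_e i j : phiR (e (i, j)) = delta_mx i j.
  by rewrite /phiR /= phi_e map_delta_mx.
(* Leibniz on e_j0 * e_0k = e_jk splits E into a left and a right part. *)
pose d j k := E (e (j, ord0)) * delta_mx ord0 k.
pose d' j k := delta_mx j ord0 * E (e (ord0, k)).
pose P := \sum_j d j j.
pose Q := \sum_k d' k k.
have E_PQ x : E x = P * phiR x + phiR x * Q.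
  set X := phiR x.
  have PX : P * X = \sum_j \sum_k X j k *: d j k.
    rewrite mulr_suml; apply: eq_bigr => j _.
    rewrite -mulrA [_ * X]delta_mxM mulr_sumr; apply: eq_bigr => k _.
    by rewrite -scalerAr.
  have XQ : X * Q = \sum_j \sum_k X j k *: d' j k.
    rewrite exchange_big mulr_sumr; apply: eq_bigr => k _.
    rewrite mulrA [X * _]mxM_delta mulr_suml; apply: eq_bigr => j _.
    by rewrite -scalerAl.
  have phi_units j k : phi (e (j, ord0) * e (ord0, k)) = delta_mx j k.
    by rewrite rmorphM !phi_e [_ * _]mul_delta_mx.
  rewrite (ker_additive_unitsE phi_units Eker) PX XQ -big_split.
  apply: eq_bigr => j _; rewrite -big_split; apply: eq_bigr => k _.
  by rewrite dE !phiR_e scalerDr addrC.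
have QP : Q = - P.
  apply/eqP; rewrite -addr_eq0 addrC eq_sym.
  by have := E_PQ 1; rewrite derivation1 // rmorph1 mulr1 mul1r => <-.
by exists P => x; rewrite E_PQ QP mulrN.
Qed.
End Derivations.

Section FreeRing.
Variable S : finType.
Local Notation F := (free_ring S).
Local Notation gen s := (<< fmu s >> : F).

Lemma free_word_nil : << FMonom [::] >> = 1 :> F.
Proof. by congr << _ >>; apply: val_inj; rewrite /= fm1. Qed.

Lemma free_word_cons s l : << FMonom (s :: l) >> = gen s * << FMonom l >> :> F.
Proof.
rewrite malgM_def fgmulUU mulr1; congr << _ *g _ >>.
by apply: val_inj; rewrite /= fmM fmuE.
Qed.

Lemma free_ring_ind (P : F -> Prop) :
    P 1 -> (forall s p, P p -> P (gen s * p)) ->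
    (forall p q, P p -> P q -> P (p + q)) -> (forall p c, P p -> P (p *~ c)) ->
  forall p, P p.
Proof.
move=> P1 PX PD PZ p.
have Pw (w : {fmonom S}) : P << w >>.
  rewrite -[w]fmK; elim: (fmonom_val w) => [|s l IH].
    by rewrite free_word_nil.
  by rewrite free_word_cons; apply: PX.
rewrite (monalgE p); elim: (X in \sum_(k <- X) _) => [|k l IH].
  by rewrite big_nil -(mulr0z 1); apply: PZ.
rewrite big_cons; apply: PD => //.
by rewrite -[p@_k]intz raddfMz; apply: PZ; apply: Pw.
Qed.

Section Extension.
Variables (R : comNzRingType) (n : nat).
Variables (phi : {rmorphism F -> 'M[int]_n.+1}) (t : S -> 'M[R]_n.+1).
Local Notation V := 'M[R]_n.+1.

Definition upper_mx (a b : V) : 'M[R]_(n.+1 + n.+1) := block_mx a b 0 a.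

Lemma upper_mx1 : upper_mx 1 0 = 1.
Proof. by rewrite /upper_mx [RHS]scalar_mx_block. Qed.

Lemma upper_mxD a b a' b' :
  upper_mx a b + upper_mx a' b' = upper_mx (a + a') (b + b').
Proof. by rewrite /upper_mx add_block_mx addr0. Qed.

Lemma upper_mxMz a b c : upper_mx a b *~ c = upper_mx (a *~ c) (b *~ c).
Proof. by rewrite /upper_mx -!scaler_int scale_block_mx scaler0. Qed.

Lemma upper_mxM a b a' b' :
  upper_mx a b * upper_mx a' b' = upper_mx (a * a') (a * b' + b * a').
Proof.
by rewrite /upper_mx [_ * _]mulmx_block !mulmx0 !mul0mx !addr0 add0r.
Qed.

Definition upper_word (w : {fmonom S}) : 'M[R]_(n.+1 + n.+1) :=
  \prod_(s <- fmonom_val w) upper_mx (phiR R phi (gen s)) (t s).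

Lemma upper_word_is_multiplicative : mmorphism upper_word.
Proof. by split=> [w w'|]; rewrite /upper_word ?fmM ?fm1 ?big_cat ?big_nil. Qed.
HB.instance Definition _ := isMultiplicative.Build _ _ upper_word
  upper_word_is_multiplicative.

Definition upper_ext (p : F) : 'M[R]_(n.+1 + n.+1) := mmap intr upper_word p.

Lemma upper_ext_is_monoid_morphism : monoid_morphism upper_ext.
Proof.
have comm_int (p : F) w w' : GRing.comm (intr p@_w) (upper_word w').
  exact/commr_sym/commr_int.
by have [upper_extM upper_ext1] := commr_mmap_is_multiplicative comm_int.
Qed.
HB.instance Definition _ :=
  GRing.Additive.copy upper_ext (mmap intr upper_word).
HB.instance Definition _ := GRing.isMonoidMorphism.Build _ _ upper_ext
  upper_ext_is_monoid_morphism.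

Lemma upper_ext_gen s : upper_ext (gen s) = upper_mx (phiR R phi (gen s)) (t s).
Proof. by rewrite /upper_ext mmapU /upper_word fmU big_seq1 mul1r. Qed.

Lemma upper_extE p :
  upper_ext p = upper_mx (phiR R phi p) (ursubmx (upper_ext p)).
Proof.
suff [b Eb] : exists b, upper_ext p = upper_mx (phiR R phi p) b.
  by rewrite Eb /upper_mx block_mxKur.
elim/free_ring_ind: p => [|s p [b Eb]|p q [b Eb] [b' Eb']|p c [b Eb]].
- by exists 0; rewrite !rmorph1 upper_mx1.
- by eexists; rewrite !rmorphM /= upper_ext_gen Eb upper_mxM.
- by eexists; rewrite !rmorphD /= Eb Eb' upper_mxD.
- by eexists; rewrite !rmorphMz /= Eb upper_mxMz.
Qed.

Definition deriv_ext p := ursubmx (upper_ext p).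

Lemma deriv_ext_is_zmod_morphism : zmod_morphism deriv_ext.
Proof.
move=> p q; rewrite /deriv_ext raddfB /= (upper_extE p) (upper_extE q).
by rewrite /upper_mx opp_block_mx add_block_mx !block_mxKur.
Qed.
HB.instance Definition _ :=
  GRing.isZmodMorphism.Build F V deriv_ext deriv_ext_is_zmod_morphism.

Lemma deriv_ext_derivation : derivation phi deriv_ext.
Proof.
move=> p q; have /= := rmorphM upper_ext p q.
rewrite (upper_extE (p * q)) (upper_extE p) (upper_extE q) upper_mxM.
move=> /(congr1 ursubmx).
by rewrite /upper_mx !block_mxKur.
Qed.

Lemma deriv_ext_gen s : deriv_ext (gen s) = t s.
Proof. by rewrite /deriv_ext upper_ext_gen /upper_mx block_mxKur. Qed.
End Extension.

Lemma deriv_extB (R : comNzRingType) n (phi : {rmorphism F -> 'M[int]_n.+1})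
    (t u : {ffun S -> 'M[R]_n.+1}) p :
  deriv_ext phi (t - u) p = deriv_ext phi t p - deriv_ext phi u p.
Proof.
have dE := deriv_ext_derivation.
elim/free_ring_ind: p => [|s p IHp|p q IHp IHq|p c IHp].
- by rewrite !(derivation1 (dE _ _ _ _)) subr0.
- by rewrite !dE IHp !deriv_ext_gen !ffunE mulrBr mulrBl opprD addrACA.
- by rewrite !raddfD /= IHp IHq addrACA.
- by rewrite !raddfMz /= IHp mulrzBl mulNrz.
Qed.
End FreeRing.

Lemma card_sqmx_gt1 (R : finNzRingType) n : (1 < #|'M[R]_n.+1|)%N.
Proof. by apply/card_gt1P; exists 0, 1; rewrite eq_sym oner_eq0. Qed.

Local Open Scope fset_scope.

Section PresentationBound.
Variables (R : finComNzRingType) (S : finType) (n : nat).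
Variable phi : {rmorphism free_ring S -> 'M[int]_n.+1}.
Variable Rel : {fset free_ring S}.
Hypothesis phi_surj : forall M, exists p, phi p = M.
Hypothesis phi_ker :
  forall p, phi p = 0 <-> in_ideal_gen (fun r => r \in Rel) p.
Local Notation V := 'M[R]_n.+1.
Local Notation gen s := (<< fmu s >> : free_ring S).

Definition rel_values (t : {ffun S -> V}) : {ffun Rel -> V} :=
  [ffun r => deriv_ext phi t (val r)].

Lemma rel_values_is_zmod_morphism : zmod_morphism rel_values.
Proof. by move=> t u; apply/ffunP => r; rewrite !ffunE deriv_extB. Qed.

Definition inner_values (P : V) : {ffun S -> V} :=
  [ffun s => P * phiR R phi (gen s) - phiR R phi (gen s) * P].

Lemma rel_values_ker :
  [set t | rel_values t == 0] \subset [set inner_values P | P : V].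
Proof.
apply/subsetP => t; rewrite inE => /eqP Lt0.
have Rel0 r : r \in Rel -> deriv_ext phi t r = 0.
  move=> rRel; have := congr1 (fun f : {ffun Rel -> V} => f [` rRel]) Lt0.
  by rewrite !ffunE.
have phiRel r : r \in Rel -> phi r = 0.
  move=> rRel; apply/phi_ker.
  exists 1%N, (fun _ => 1), (fun _ => r), (fun _ => 1).
  by rewrite big_ord1 mul1r mulr1.
have ker0 p : phi p = 0 -> deriv_ext phi t p = 0.
  move/phi_ker.
  exact: (derivation_ideal (deriv_ext_derivation phi t) phiRel Rel0).
have [P DP] := derivation_inner phi_surj (deriv_ext_derivation phi t) ker0.
apply/imsetP; exists P => //; apply/ffunP => s.
by rewrite ffunE -DP /= deriv_ext_gen.
Qed.

Lemma card_inner_values : (#|[set inner_values P | P : V]| < #|V|)%N.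
Proof.
rewrite ltn_neqAle leq_imset_card andbT; apply/negP => /imset_injP inner_inj.
have : inner_values 0 = inner_values 1.
  by apply/ffunP => s; rewrite !ffunE mul0r mulr0 mul1r mulr1 !subrr.
by move/inner_inj => /(_ isT isT) /eqP; rewrite eq_sym oner_eq0.
Qed.

Lemma card_assignments_lt : (#|V| ^ #|S| < #|V| ^ (#|` Rel|).+1)%N.
Proof.
have := card_le_mul_ker rel_values_is_zmod_morphism.
rewrite !card_ffun -cardfE => le_VS_VRel.
have lt_ker := leq_ltn_trans (subset_leq_card rel_values_ker) card_inner_values.
rewrite expnS mulnC (leq_ltn_trans le_VS_VRel) // ltn_mul2l lt_ker andbT.
by rewrite expn_gt0 (ltnW (card_sqmx_gt1 _ _)).
Qed.
End PresentationBound.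

Theorem theorem3 (n : nat) (hn : (2 <= n)%N) (S : finType)
    (Rel : {fset free_ring S})
    (phi : {rmorphism free_ring S -> 'M[int]_n})
    (phi_surj : forall M : 'M[int]_n, exists p : free_ring S, phi p = M)
    (phi_ker : forall p : free_ring S,
        phi p = 0 <-> in_ideal_gen (fun r => r \in Rel) p) :
  (#|S| <= #|` Rel|)%N.
Proof.
case: n hn phi phi_surj phi_ker => [//|n] _ phi phi_surj phi_ker.
have := card_assignments_lt 'Z_2 phi_surj phi_ker.
by rewrite ltn_exp2l ?card_sqmx_gt1.
Qed.
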